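(* Let $L$ be a $C$-lattice, $n\ge 1$, $m$ a maximal element of $L$ and $q$ a proper element of $L$. (1) If $q$ is a quasi $n$-absorbing element of $L$, then $q_m$ is a quasi $n$-absorbing element of $L_m$. (2) If $q$ is a weakly quasi $n$-absorbing element of $L$, then $q_m$ is a weakly quasi $n$-absorbing element of $L_m$.
   Context: A multiplicative lattice is a complete lattice $L$ with least element $0$ and compact greatest element $1$, equipped with a commutative, associative product that distributes over arbitrary joins and has $1$ as multiplicative identity. An element $a$ is compact if $a\le\bigvee_{\alpha\in I}a_\alpha$ implies $a\le\bigvee_{\alpha\in I_0}a_\alpha$ for some finite $I_0\subseteq I$; $L_*$ denotes the set of compact elements. A $C$-lattice is a multiplicative lattice generated under joins by a multiplicatively closed set $C$ of compact elements. A proper element $m$ is maximal if $m<x\le1$ implies $x=1$. For a multiplicatively closed subset $S\subseteq L_*$ and $a\in L$, $a_S=\bigvee\{x\in L_*: xs\le a \text{ for some } s\in S\}$, and $L_S=\{a_S:a\in L\}$ is a multiplicative lattice with the order of $L$ and product $a_S\circ b_S=(a_Sb_S)_S$. For $m$ maximal (hence prime), $L_m=L_S$ and $q_m=q_S$ with $S=\{x\in L_*: x\not\le m\}$. $a^0=1$. A proper element $q$ of a multiplicative lattice $M$ is quasi $n$-absorbing if whenever $a^nb\le q$ for some compact $a,b\in M$, then $a^n\le q$ or $a^{n-1}b\le q$; it is weakly quasi $n$-absorbing if whenever $0_M\ne a^nb\le q$ for compact $a,b\in M$, then $a^n\le q$ or $a^{n-1}b\le q$. *)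

From Stdlib Require Import List.

(** The least element is [sup (fun _ => False)]. *)
Record MultLattice := {
  carrier :> Type;
  le : carrier -> carrier -> Prop;
  le_refl : forall x, le x x;
  le_trans : forall x y z, le x y -> le y z -> le x z;
  le_antisym : forall x y, le x y -> le y x -> x = y;
  sup : (carrier -> Prop) -> carrier;
  sup_ub : forall (F : carrier -> Prop) x, F x -> le x (sup F);
  sup_least : forall (F : carrier -> Prop) u, (forall x, F x -> le x u) -> le (sup F) u;
  mul : carrier -> carrier -> carrier;
  mulC : forall x y, mul x y = mul y x;
  mulA : forall x y z, mul x (mul y z) = mul (mul x y) z;
  one : carrier;
  one_top : forall x, le x one;
  mul1x : forall x, mul one x = x;
  mul_sup : forall a (F : carrier -> Prop),
      mul a (sup F) = sup (fun y => exists x, F x /\ y = mul a x);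
  one_compact : forall F : carrier -> Prop, le one (sup F) ->
      exists l : list carrier, (forall x, In x l -> F x) /\ le one (sup (fun x => In x l))
}.

Arguments le {m}.
Arguments sup {m}.
Arguments mul {m}.
Arguments one {m}.

Section Defs.
Variable L : MultLattice.

Definition compactL (a : L) : Prop :=
  forall F : L -> Prop, le a (sup F) ->
    exists l : list L, (forall x, In x l -> F x) /\ le a (sup (fun x => In x l)).

Definition C_lattice : Prop :=
  exists C : L -> Prop,
    (forall c, C c -> compactL c) /\ C one /\
    (forall x y, C x -> C y -> C (mul x y)) /\
    (forall a : L, a = sup (fun c => C c /\ le c a)).

Definition maximal (m : L) : Prop :=
  m <> one /\ forall x : L, le m x -> x <> m -> x = one.

(** a_S for S = {x in L_* : x not <= m}, i.e. a_m *)
Definition locM (m a : L) : L :=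
  sup (fun x => compactL x /\
        exists s, compactL s /\ ~ le s m /\ le (mul x s) a).

Definition inLm (m x : L) : Prop := exists a : L, x = locM m a.
Definition mulLm (m x y : L) : L := locM m (mul x y).
End Defs.

Arguments compactL {L}.
Arguments C_lattice L : clear implicits.
Arguments maximal {L}.
Arguments locM {L}.
Arguments inLm {L}.
Arguments mulLm {L}.

(** Generic notions for a multiplicative lattice M presented as a subset [P] of a
    type T, with order [le], product [mul] and identity [one]. Joins and
    compactness are taken *inside M* (order-theoretically). *)
Section Generic.
Variables (T : Type) (P : T -> Prop) (le : T -> T -> Prop)
          (mul : T -> T -> T) (one : T).

Definition isLub (F : T -> Prop) (u : T) : Prop :=
  P u /\ (forall x, F x -> le x u) /\
  (forall v, P v -> (forall x, F x -> le x v) -> le u v).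

Definition compactIn (a : T) : Prop :=
  P a /\ forall (F : T -> Prop) (u : T), (forall x, F x -> P x) -> isLub F u -> le a u ->
    exists l : list T, (forall x, In x l -> F x) /\
      (forall v, P v -> (forall x, In x l -> le x v) -> le a v).

Definition isBottom (z : T) : Prop := P z /\ forall x, P x -> le z x.

Fixpoint pw (a : T) (n : nat) : T :=
  match n with O => one | S k => mul a (pw a k) end.

Definition quasi_nabs (n : nat) (q : T) : Prop :=
  P q /\ q <> one /\
  forall a b, compactIn a -> compactIn b ->
    le (mul (pw a n) b) q -> le (pw a n) q \/ le (mul (pw a (n - 1)) b) q.

Definition weakly_quasi_nabs (n : nat) (q : T) : Prop :=
  P q /\ q <> one /\
  forall a b, compactIn a -> compactIn b ->
    ~ isBottom (mul (pw a n) b) ->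
    le (mul (pw a n) b) q -> le (pw a n) q \/ le (mul (pw a (n - 1)) b) q.
End Generic.

Arguments isLub {T}.
Arguments compactIn {T}.
Arguments isBottom {T}.
Arguments pw {T}.
Arguments quasi_nabs {T}.
Arguments weakly_quasi_nabs {T}.

From Stdlib Require Import List Lia.
Import ListNotations.

(* Compact elements of [L_m] are exactly the localizations [x_m] of compact [x] in [L], and
   for compact [x] one has [x <= q_m] iff [x s <= q] for some compact [s] not below [m].
   Given [a_m^n b_m <= q_m], choose such an [s] for [x^n y] and absorb it into the base:
   [(x s)^n y <= q].  The hypothesis on [q] applied to [x s] and [y] gives
   [x^n s^n <= q] or [x^(n-1) y s^(n-1) <= q]; since [m] is prime the powers of [s] stay
   outside [m], and localizing removes them.  In the weak case, [(x s)^n y = 0] would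
   force [(x^n y)_m] to be the bottom of [L_m]. *)

Section MultLatticeFacts.
Variable L : MultLattice.

Local Notation pwL := (pw (@mul L) one).

Definition join2 (a b : L) : L := sup (fun t => t = a \/ t = b).

Lemma le_join2l (a b : L) : le a (join2 a b).
Proof. apply sup_ub; auto. Qed.

Lemma le_join2r (a b : L) : le b (join2 a b).
Proof. apply sup_ub; auto. Qed.

Lemma mul_monor (a b c : L) : le a b -> le (mul c a) (mul c b).
Proof.
  intros Hab. assert (Eb : b = join2 a b).
  { apply le_antisym; [apply le_join2r|].
    apply sup_least; intros t [-> | ->]; auto using le_refl. }
  rewrite Eb; unfold join2; rewrite mul_sup. apply sup_ub. exists a; auto.
Qed.

Lemma mul_monol (a b c : L) : le a b -> le (mul a c) (mul b c).
Proof. intros; rewrite (mulC _ a), (mulC _ b); apply mul_monor; auto. Qed.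

Lemma mul_mono (a b c d : L) : le a b -> le c d -> le (mul a c) (mul b d).
Proof. intros; eapply le_trans; [apply mul_monol | apply mul_monor]; eauto. Qed.

Lemma mulr1 (a : L) : mul a one = a.
Proof. rewrite mulC; apply mul1x. Qed.

Lemma mul_le_l (a b : L) : le (mul a b) a.
Proof. rewrite <- (mulr1 a) at 2. apply mul_monor, one_top. Qed.

Lemma mulACA (a b c d : L) : mul (mul a b) (mul c d) = mul (mul a c) (mul b d).
Proof.
  rewrite <- mulA, (mulA _ b c d), (mulC _ b c), <- (mulA _ c b d), mulA.
  reflexivity.
Qed.

Lemma sup_mono (F G : L -> Prop) : (forall x, F x -> G x) -> le (sup F) (sup G).
Proof. intros H; apply sup_least; intros; apply sup_ub; auto. Qed.

Lemma mul_supl_le (F : L -> Prop) (t w : L) :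
  (forall f, F f -> le (mul f t) w) -> le (mul (sup F) t) w.
Proof.
  intros H. rewrite mulC, mul_sup. apply sup_least. intros y [f [Ff ->]].
  rewrite mulC; auto.
Qed.

Lemma mul_sup2_le (F G : L -> Prop) (w : L) :
  (forall f g, F f -> G g -> le (mul f g) w) -> le (mul (sup F) (sup G)) w.
Proof.
  intros H. rewrite mul_sup. apply sup_least. intros y [g [Gg ->]].
  apply mul_supl_le. auto.
Qed.

Lemma pw_mul (x s : L) k : pwL (mul x s) k = mul (pwL x k) (pwL s k).
Proof.
  induction k as [|k IH]; simpl; [symmetry; apply mul1x|].
  rewrite IH. apply mulACA.
Qed.

Lemma pw_mul_mulr (x s y : L) k :
  mul (pwL (mul x s) k) y = mul (mul (pwL x k) y) (pwL s k).
Proof. rewrite pw_mul, <- !mulA, (mulC _ (pwL s k) y). reflexivity. Qed.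

Lemma pw_le (s : L) n : 1 <= n -> le (pwL s n) s.
Proof. destruct n; [lia|]. intros; simpl; apply mul_le_l. Qed.

Lemma sup_list_cover (F : L -> Prop) (l : list L) :
  (forall e, In e l -> exists l0, (forall x, In x l0 -> F x) /\ le e (sup (fun x => In x l0))) ->
  exists lF, (forall x, In x lF -> F x) /\ forall e, In e l -> le e (sup (fun x => In x lF)).
Proof.
  induction l as [|a l IH]; intros H.
  - exists []; split; [intros x []| intros e []].
  - destruct (H a (or_introl eq_refl)) as [l1 [Hl1 Ha]].
    destruct IH as [l2 [Hl2 Hl]]; [intros e He; apply H; right; auto|].
    exists (l1 ++ l2). split.
    + intros x Hx; apply in_app_or in Hx as [Hx|Hx]; auto.
    + intros e [<- | He]; eapply le_trans; [exact Ha| |apply Hl; auto|];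
        apply sup_mono; intros; apply in_or_app; auto.
Qed.

Lemma compactL_sup_list (l : list L) :
  (forall e, In e l -> compactL e) -> compactL (sup (fun x => In x l)).
Proof.
  intros Hl F HF. destruct (sup_list_cover F l) as [lF [HlF Hcov]].
  - intros e He. apply Hl; auto. eapply le_trans; [|exact HF]. apply sup_ub; auto.
  - exists lF; split; auto. apply sup_least; auto.
Qed.

Lemma compactL_sup_list_eq (w : L) (l : list L) : (forall e, In e l -> compactL e) ->
  le w (sup (fun x => In x l)) -> (forall e, In e l -> le e w) -> compactL w.
Proof.
  intros Hl Hw Hle. replace w with (sup (fun x => In x l)).
  - apply compactL_sup_list; auto.
  - apply le_antisym; auto. apply sup_least; auto.
Qed.

Lemma compactL_compactIn (x : L) : compactL x -> compactIn (fun _ : L => True) le x.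
Proof.
  intros Hx. split; auto. intros F u _ [_ [Hub Hleast]] Hxu.
  destruct (Hx F) as [l [Hl Hxl]].
  - eapply le_trans; [exact Hxu|]. apply Hleast; auto. intros; apply sup_ub; auto.
  - exists l. split; auto. intros v _ Hv. eapply le_trans; [exact Hxl|]. apply sup_least; auto.
Qed.

Section Generators.
Variable C : L -> Prop.
Hypothesis C_compact : forall c, C c -> compactL c.
Hypothesis C_mul : forall x y, C x -> C y -> C (mul x y).
Hypothesis C_generates : forall a : L, a = sup (fun c => C c /\ le c a).

Lemma compactL_generators (x : L) : compactL x -> exists l,
  (forall d, In d l -> C d /\ le d x) /\ le x (sup (fun t => In t l)).
Proof. intros Hx. apply Hx. rewrite <- (C_generates x). apply le_refl. Qed.

Lemma compactL_mul (x y : L) : compactL x -> compactL y -> compactL (mul x y).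
Proof.
  intros Hx Hy.
  destruct (compactL_generators x Hx) as [lx [Clx Hlx]].
  destruct (compactL_generators y Hy) as [ly [Cly Hly]].
  assert (Hprod : forall e, In e (flat_map (fun c => map (mul c) ly) lx) ->
            exists c d, In c lx /\ In d ly /\ e = mul c d).
  { intros e He. apply in_flat_map in He as [c [Hc He]].
    apply in_map_iff in He as [d [<- Hd]]. eauto. }
  apply compactL_sup_list_eq with (l := flat_map (fun c => map (mul c) ly) lx).
  - intros e He. destruct (Hprod e He) as [c [d [Hc [Hd ->]]]].
    apply C_compact, C_mul; [apply Clx | apply Cly]; auto.
  - eapply le_trans; [apply mul_mono; eauto|].
    apply mul_sup2_le. intros c d Hc Hd. apply sup_ub, in_flat_map.
    exists c; split; auto. apply in_map; auto.
  - intros e He. destruct (Hprod e He) as [c [d [Hc [Hd ->]]]].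
    apply mul_mono; [apply Clx | apply Cly]; auto.
Qed.

Lemma compactL_pw (x : L) k : compactL x -> compactL (pwL x k).
Proof.
  intros Hx; induction k; simpl; [exact (one_compact L) | apply compactL_mul; auto].
Qed.

Section Localization.
Variable m : L.
Hypothesis m_maximal : maximal m.

Local Notation loc := (locM m).

Lemma maximal_one_not_le : ~ le one m.
Proof.
  destruct m_maximal as [Hm1 _]. intros E. apply Hm1, le_antisym; auto using one_top.
Qed.

Lemma maximal_prime (s t : L) : ~ le s m -> ~ le t m -> ~ le (mul s t) m.
Proof.
  destruct m_maximal as [_ Hmax]. intros Hs Ht Hst.
  assert (Hjoin : join2 m s = one).
  { apply Hmax; [apply le_join2l|]. intros E. apply Hs. rewrite <- E. apply le_join2r. }
  apply Ht. replace t with (mul t (join2 m s)) by (rewrite Hjoin; apply mulr1).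
  unfold join2. rewrite mul_sup. apply sup_least. intros y [x [[-> | ->] ->]].
  - rewrite mulC; apply mul_le_l.
  - rewrite mulC; auto.
Qed.

Lemma maximal_pw_not_le (s : L) k : ~ le s m -> ~ le (pwL s k) m.
Proof.
  intros Hs; induction k; simpl; [apply maximal_one_not_le | apply maximal_prime; auto].
Qed.

Lemma le_locM (w s z : L) :
  compactL w -> compactL s -> ~ le s m -> le (mul w s) z -> le w (loc z).
Proof. intros; apply sup_ub; eauto 6. Qed.

Lemma le_locM_witness (w z : L) : compactL w -> le w (loc z) ->
  exists s, compactL s /\ ~ le s m /\ le (mul w s) z.
Proof.
  intros Hw Hwz. destruct (Hw _ Hwz) as [l [Hl Hwl]].
  assert (Hs : exists s, compactL s /\ ~ le s m /\ forall e, In e l -> le (mul e s) z).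
  { clear Hwl. induction l as [|a l IH].
    - exists one. split; [exact (one_compact L)|].
      split; [apply maximal_one_not_le | intros e []].
    - destruct IH as [s1 [Cs1 [Ns1 Hs1]]]; [intros; apply Hl; right; auto|].
      destruct (Hl a (or_introl eq_refl)) as [_ [s0 [Cs0 [Ns0 Hs0]]]].
      exists (mul s0 s1). split; [apply compactL_mul; auto|].
      split; [apply maximal_prime; auto|].
      intros e [<- | He].
      + eapply le_trans; [|exact Hs0]. rewrite mulA. apply mul_le_l.
      + eapply le_trans; [|apply Hs1; eauto]. rewrite (mulC _ s0 s1), mulA. apply mul_le_l. }
  destruct Hs as [s [Cs [Ns Hs]]]. exists s. split; auto. split; auto.
  eapply le_trans; [apply mul_monol; eauto|]. apply mul_supl_le. auto.
Qed.

Lemma locM_ge (z : L) : le z (loc z).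
Proof.
  apply le_trans with (sup (fun c => C c /\ le c z)); [rewrite <- C_generates; apply le_refl|].
  apply sup_least. intros c [Cc Hc]. apply le_locM with one; auto.
  - exact (one_compact L).
  - apply maximal_one_not_le.
  - rewrite mulr1; auto.
Qed.

Lemma locM_mono (z w : L) : le z w -> le (loc z) (loc w).
Proof.
  intros H. unfold locM; apply sup_mono. intros x [Cx [s [Cs [Ns Hs]]]].
  split; auto. exists s; repeat split; auto. eapply le_trans; eauto.
Qed.

Lemma locM_idem (z : L) : loc (loc z) = loc z.
Proof.
  apply le_antisym; [|apply locM_ge].
  apply sup_least. intros x [Cx [s [Cs [Ns Hxs]]]].
  destruct (le_locM_witness (mul x s) z) as [t [Ct [Nt Ht]]];
    [apply compactL_mul; auto | auto |].
  apply le_locM with (mul s t); auto.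
  - apply compactL_mul; auto.
  - apply maximal_prime; auto.
  - rewrite mulA; auto.
Qed.

Lemma locM_le_locM (w z : L) : le w (loc z) -> le (loc w) (loc z).
Proof. intros H. rewrite <- (locM_idem z). apply locM_mono, H. Qed.

Lemma locM_le_pw_mulr (w s z : L) k : compactL w -> compactL s -> ~ le s m ->
  le (mul w (pwL s k)) z -> le (loc w) (loc z).
Proof.
  intros Cw Cs Ns H. apply locM_le_locM, le_locM with (pwL s k);
    auto using compactL_pw, maximal_pw_not_le.
Qed.

Lemma mul_locM_le (u v : L) : le (mul (loc u) (loc v)) (loc (mul u v)).
Proof.
  apply mul_sup2_le. intros f g [Cf [s [Cs [Ns Hs]]]] [Cg [t [Ct [Nt Ht]]]].
  apply le_locM with (mul s t); auto using compactL_mul, maximal_prime.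
  rewrite mulACA. apply mul_mono; auto.
Qed.

Lemma mulLm_locM (u v : L) : mulLm m (loc u) (loc v) = loc (mul u v).
Proof.
  unfold mulLm. apply le_antisym.
  - apply locM_le_locM, mul_locM_le.
  - apply locM_mono, mul_mono; apply locM_ge.
Qed.

Lemma locM_one : loc one = one.
Proof. apply le_antisym; [apply one_top | apply locM_ge]. Qed.

Lemma pw_locM (x : L) k : pw (mulLm m) one (loc x) k = loc (pwL x k).
Proof.
  induction k as [|k IH]; simpl; [symmetry; apply locM_one|].
  rewrite IH. apply mulLm_locM.
Qed.

Lemma locM_generators_list (a : L) (l : list L) :
  (forall c, In c l -> exists d, C d /\ le d a /\ c = loc d) ->
  exists ld, (forall d, In d ld -> C d /\ le d a) /\
    forall c, In c l -> exists d, In d ld /\ c = loc d.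
Proof.
  induction l as [|c l IH]; intros H.
  - exists []; split; [intros d [] | intros e []].
  - destruct (H c (or_introl eq_refl)) as [d [Cd [Hd ->]]].
    destruct IH as [ld [Hld Hl]]; [intros; apply H; right; auto|].
    exists (d :: ld). split.
    + intros e [<- | He]; auto.
    + intros e [<- | He]; [exists d; simpl; auto|].
      destruct (Hl e He) as [d' [Hd' ->]]. exists d'; simpl; auto.
Qed.

(* [a] is the join in [L_m] of the [d_m] with [d] a generator below [a]; compactness in
   [L_m] extracts finitely many, whose join in [L] is a compact preimage of [a]. *)
Lemma compactIn_Lm_locM (a : L) :
  compactIn (inLm m) le a -> exists x, compactL x /\ a = loc x.
Proof.
  intros [[a0 Ha0] Hcompact].
  assert (Ea : loc a = a) by (rewrite Ha0; apply locM_idem).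
  destruct (Hcompact (fun c => exists d, C d /\ le d a /\ c = loc d) a) as [l [Hl Hub]].
  - intros x [d [_ [_ ->]]]; exists d; auto.
  - split; [exists a0; auto|split].
    + intros x [d [Cd [Hd ->]]]. rewrite <- Ea. apply locM_mono; auto.
    + intros v [v0 ->] Hv. apply le_trans with (sup (fun c => C c /\ le c a));
        [rewrite <- C_generates; apply le_refl|].
      apply sup_least; intros d [Cd Hd]. eapply le_trans; [apply locM_ge|].
      apply Hv; exists d; auto.
  - apply le_refl.
  - destruct (locM_generators_list a l Hl) as [ld [Hld Hcov]].
    exists (sup (fun t => In t ld)). split.
    + apply compactL_sup_list. intros e He; apply C_compact, Hld; auto.
    + apply le_antisym.
      * apply Hub; [eexists; eauto|]. intros c Hc. destruct (Hcov c Hc) as [d [Hd ->]].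
        apply locM_mono, sup_ub; auto.
      * rewrite <- Ea. apply locM_mono, sup_least. intros; apply Hld; auto.
Qed.

Lemma pw_mul_le_of_le_locM (n : nat) (q x y : L) : 1 <= n -> compactL x -> compactL y ->
  le (loc (mul (pwL x n) y)) (loc q) ->
  exists s, compactL s /\ ~ le s m /\ le (mul (pwL (mul x s) n) y) q.
Proof.
  intros Hn Cx Cy Hle.
  destruct (le_locM_witness (mul (pwL x n) y) q) as [s [Cs [Ns Hs]]].
  - apply compactL_mul, Cy. apply compactL_pw, Cx.
  - eapply le_trans; [apply locM_ge | exact Hle].
  - exists s. repeat split; auto. rewrite pw_mul_mulr.
    eapply le_trans; [|exact Hs]. apply mul_monor, pw_le, Hn.
Qed.

Section Absorbing.
Variables (n : nat) (q x y s : L).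
Hypotheses (x_compact : compactL x) (y_compact : compactL y)
  (s_compact : compactL s) (s_not_le : ~ le s m).

Lemma locM_absorbing_cases :
  le (pwL (mul x s) n) q \/ le (mul (pwL (mul x s) (n - 1)) y) q ->
  le (loc (pwL x n)) (loc q) \/ le (loc (mul (pwL x (n - 1)) y)) (loc q).
Proof.
  intros [H | H]; [left | right].
  - apply locM_le_pw_mulr with s n; auto using compactL_pw.
    rewrite <- pw_mul; auto.
  - apply locM_le_pw_mulr with s (n - 1); auto using compactL_mul, compactL_pw.
    rewrite <- pw_mul_mulr; auto.
Qed.

Lemma locM_isBottom : isBottom (fun _ : L => True) le (mul (pwL (mul x s) n) y) ->
  isBottom (inLm m) le (loc (mul (pwL x n) y)).
Proof.
  intros [_ Hbot]. split; [eexists; eauto|].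
  intros v [v0 ->]. apply locM_le_pw_mulr with s n; auto using compactL_mul, compactL_pw.
  rewrite <- pw_mul_mulr. apply Hbot; auto.
Qed.

End Absorbing.

Lemma quasi_nabs_locM (n : nat) (q : L) : 1 <= n ->
  quasi_nabs (fun _ : L => True) le mul one n q -> loc q <> one ->
  quasi_nabs (inLm m) le (mulLm m) one n (loc q).
Proof.
  intros Hn [_ [_ Hq]] Hqm. split; [exists q; auto | split; auto].
  intros a b Ha Hb Hab.
  destruct (compactIn_Lm_locM a Ha) as [x [Cx ->]].
  destruct (compactIn_Lm_locM b Hb) as [y [Cy ->]].
  rewrite !pw_locM, !mulLm_locM in *.
  destruct (pw_mul_le_of_le_locM n q x y) as [s [Cs [Ns Hs]]]; auto.
  apply locM_absorbing_cases with s; auto.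
  apply Hq; auto using compactL_compactIn, compactL_mul.
Qed.

Lemma weakly_quasi_nabs_locM (n : nat) (q : L) : 1 <= n ->
  weakly_quasi_nabs (fun _ : L => True) le mul one n q -> loc q <> one ->
  weakly_quasi_nabs (inLm m) le (mulLm m) one n (loc q).
Proof.
  intros Hn [_ [_ Hq]] Hqm. split; [exists q; auto | split; auto].
  intros a b Ha Hb Hnz Hab.
  destruct (compactIn_Lm_locM a Ha) as [x [Cx ->]].
  destruct (compactIn_Lm_locM b Hb) as [y [Cy ->]].
  rewrite !pw_locM, !mulLm_locM in *.
  destruct (pw_mul_le_of_le_locM n q x y) as [s [Cs [Ns Hs]]]; auto.
  apply locM_absorbing_cases with s; auto.
  apply Hq; auto using compactL_compactIn, compactL_mul.
  intros Hbot. apply Hnz, locM_isBottom with s; auto.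
Qed.

End Localization.
End Generators.
End MultLatticeFacts.

Theorem mainTheorem10 (L : MultLattice) (n : nat) (m q : L) :
  C_lattice L -> 1 <= n -> maximal m -> q <> one ->
  (quasi_nabs (fun _ : L => True) le mul one n q ->
     locM m q <> one ->
     quasi_nabs (inLm m) le (mulLm m) one n (locM m q)) /\
  (weakly_quasi_nabs (fun _ : L => True) le mul one n q ->
     locM m q <> one ->
     weakly_quasi_nabs (inLm m) le (mulLm m) one n (locM m q)).
Proof.
  intros [C [C_compact [_ [C_mul C_generates]]]] Hn Hm _.
  split.
  - apply (quasi_nabs_locM L C); auto.
  - apply (weakly_quasi_nabs_locM L C); auto.
Qed.
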